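(* Let $M$ be a finite $\Sigma$-Rickart right $R$-module. Then: (i) for all integers $m,n>0$, $M^{(m)}$ is $M^{(n)}$-Rickart; (ii) for every $K\in\mathrm{add}(M)$, the intersection of two finitely $M$-generated submodules of $K$ is finitely $M$-generated; (iii) the intersection of two finitely $M$-generated submodules of $M$ is finitely $M$-generated.
   Context: Modules are unitary right $R$-modules; $M^{(n)}$ is the direct sum of $n$ copies of $M$. $M$ is Rickart if $\ker\varphi$ is a direct summand of $M$ for all $\varphi\in\mathrm{End}_R(M)$; $M$ is finite $\Sigma$-Rickart if $M^{(n)}$ is Rickart for all $n>0$. A module $A$ is $N$-Rickart if $\ker\rho$ is a direct summand of $A$ for every $\rho\in\mathrm{Hom}_R(A,N)$. $\mathrm{add}(M)$ is the class of modules isomorphic to a direct summand of $M^{(n)}$ for some integer $n>0$. A module $N$ is finitely $M$-generated if there is an epimorphism $M^{(n)}\to N$ for some integer $n>0$. *)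

From HB Require Import structures.
From mathcomp Require Import all_boot all_order all_algebra.
Set Implicit Arguments. Unset Strict Implicit. Unset Printing Implicit Defensive.
Import GRing.Theory.
Local Open Scope ring_scope.

(* Right R-modules are modelled as left modules over the converse ring R^c. *)

Definition dsum (R : nzRingType) (M : lmodType R) (n : nat) : lmodType R :=
  {ffun 'I_n -> M}.

Section ModDefs.
Variable R : nzRingType.

Definition submodule (M : lmodType R) (S : M -> Prop) : Prop :=
  S 0 /\ (forall x y, S x -> S y -> S (x + y)) /\ (forall (a : R) x, S x -> S (a *: x)).

Definition direct_summand (M : lmodType R) (S : M -> Prop) : Prop :=
  submodule S /\ exists T : M -> Prop, submodule T /\
    (forall x, S x -> T x -> x = 0) /\
    (forall x, exists s t, S s /\ T t /\ x = s + t).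

Definition kernel (M N : lmodType R) (f : {linear M -> N}) : M -> Prop :=
  fun x => f x = 0.

Definition image (M N : lmodType R) (f : {linear M -> N}) : N -> Prop :=
  fun y => exists x, f x = y.

Definition rel_Rickart (A N : lmodType R) : Prop :=
  forall rho : {linear A -> N}, direct_summand (kernel rho).

Definition Rickart (M : lmodType R) : Prop :=
  forall phi : {linear M -> M}, direct_summand (kernel phi).

Definition finite_Sigma_Rickart (M : lmodType R) : Prop :=
  forall n : nat, (0 < n)%N -> Rickart (dsum M n).

Definition in_add (M K : lmodType R) : Prop :=
  exists n : nat, (0 < n)%N /\ exists f : {linear K -> dsum M n},
    injective f /\ direct_summand (image f).

Definition fin_gen (M K : lmodType R) (N : K -> Prop) : Prop :=
  exists n : nat, (0 < n)%N /\ exists g : {linear dsum M n -> K},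
    forall y, N y <-> image g y.

End ModDefs.

(* The proof has
   two ingredients.
   (i)  If A is a retract of a module P (A -> P -> A is the identity) and
        rho : A -> B, then ker rho is a direct summand of A as soon as
        ker (rho o pr) is one of P.  With P = M^(m+n) = M^(m) (+) M^(n), the
        endomorphism "apply rho to the first block, put the result in the
        second block" of P has kernel ker (rho o pr), so M^(m) is M^(n)-Rickart.
   (ii) Let K embed via an injective f into P, and let N1, N2 <= K be the
        images of g1 : M^(a) -> K and g2 : M^(b) -> K.  Then N1 /\ N2 is the
        image, under z |-> g1 (first block of z), of the kernel of
        h : M^(a+b) -> P, h z = f (g1 z1) - f (g2 z2).  When M^(a+b) is
        P-Rickart this kernel is a direct summand, hence the image of a
        projection of M^(a+b), so N1 /\ N2 is finitely M-generated.
   Parts (ii) and (iii) of the theorem follow since every K in add(M) embeds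
   into some M^(n), and M itself is in add(M). *)

From HB Require Import structures.
From mathcomp Require Import all_boot all_order all_algebra.
From Stdlib Require Import ClassicalEpsilon.
Import GRing.Theory.
Local Open Scope ring_scope.

Section DirectSummands.
Context {R : nzRingType}.
Implicit Types U V W P : lmodType R.

Definition linear_of {U V : lmodType R} {f : U -> V} (f_lin : linear f) : {linear U -> V} :=
  HB.pack f (GRing.isLinear.Build R U V _ f f_lin).

Lemma kernel_submodule U V (f : {linear U -> V}) : submodule (kernel f).
Proof.
rewrite /kernel; split; first exact: linear0.
split; first by move=> x y fx0 fy0; rewrite linearD fx0 fy0 addr0.
by move=> a x fx0; rewrite linearZ_LR fx0 scaler0.
Qed.

Lemma direct_summand_ext U (S S' : U -> Prop) :
  (forall x, S x <-> S' x) -> direct_summand S -> direct_summand S'.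
Proof.
move=> eqSS' [[S0 [SD SZ]] [T [subT [ST cover]]]]; split.
  split; first exact/eqSS'.
  split; first by move=> x y /eqSS' Sx /eqSS' Sy; apply/eqSS'; apply: SD.
  by move=> a x /eqSS' Sx; apply/eqSS'; apply: SZ.
exists T; split=> //; split; first by move=> x /eqSS'; apply: ST.
move=> x; have [s [t [Ss [Tt ->]]]] := cover x.
by exists s, t; split=> //; apply/eqSS'.
Qed.

Lemma direct_summand_total U : direct_summand (fun _ : U => True).
Proof.
split; first by split=> //; split.
exists (fun x : U => x = 0); split.
  split=> //; split; first by move=> x y -> ->; rewrite addr0.
  by move=> a x ->; rewrite scaler0.
by split=> // x; exists x, 0; rewrite addr0.
Qed.

Lemma direct_summand_projection U (S : U -> Prop) :
  direct_summand S -> exists p : {linear U -> U},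
    (forall x, S (p x)) /\ (forall x, S x -> p x = x).
Proof.
move=> [[S0 [SD SZ]] [T [[T0 [TD TZ]] [ST cover]]]].
have SB x y : S x -> S y -> S (x - y).
  by move=> Sx Sy; apply: SD => //; rewrite -scaleN1r; apply: SZ.
have TB x y : T x -> T y -> T (x - y).
  by move=> Tx Ty; apply: TD => //; rewrite -scaleN1r; apply: TZ.
have decomp x : {s | exists t, S s /\ T t /\ x = s + t}.
  apply: constructive_indefinite_description.
  by have [s [t decx]] := cover x; exists s, t.
pose p x := sval (decomp x).
have p_spec x : exists t, S (p x) /\ T t /\ x = p x + t := svalP (decomp x).
have p_uniq x s t : S s -> T t -> x = s + t -> p x = s.
  move=> Ss Tt decx; have [t' [Spx [Tt' decx']]] := p_spec x.
  apply/eqP; rewrite -subr_eq0; apply/eqP; apply: ST; first exact: SB.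
  have -> : p x - s = t - t'.
    have -> : p x = s + t - t' by rewrite -decx {2}decx' addrK.
    by rewrite addrAC (addrAC s) subrr add0r.
  exact: TB.
have p_lin : linear p.
  move=> a u v; have [tu [Spu [Ttu decu]]] := p_spec u.
  have [tv [Spv [Ttv decv]]] := p_spec v.
  apply: (p_uniq _ _ (a *: tu + tv)); [by apply: SD => //; apply: SZ|
                                       by apply: TD => //; apply: TZ|].
  by rewrite {1}decu {1}decv scalerDr -!addrA; congr (_ + _); rewrite addrCA.
exists (linear_of p_lin); split=> [x|x Sx]; first by have [t []] := p_spec x.
by apply: (p_uniq x x 0) => //; rewrite addr0.
Qed.

Lemma kernel_comp_injective U V W (f : {linear U -> V}) (g : {linear V -> W}) :
  injective g -> forall x, kernel (g \o f) x <-> kernel f x.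
Proof.
move=> g_inj x; rewrite /kernel /=; split=> [gfx0|->]; last exact: linear0.
by apply: g_inj; rewrite gfx0 linear0.
Qed.

(* Kernels of maps out of a retract A of P: if ker (rho o pr) is a direct
   summand of P, then ker rho is a direct summand of A (complement pr(T)). *)
Lemma retract_kernel_summand U V P (i : {linear U -> P}) (pr : {linear P -> U})
    (rho : {linear U -> V}) :
  cancel i pr -> direct_summand (kernel (rho \o pr)) -> direct_summand (kernel rho).
Proof.
move=> iK [_ [T [[T0 [TD TZ]] [kerT cover]]]].
split; first exact: kernel_submodule.
exists (fun x => exists t, T t /\ x = pr t); split.
  split; first by exists 0; rewrite linear0.
  split.
    move=> _ _ [t [Tt ->]] [u [Tu ->]].
    by exists (t + u); rewrite linearD; split=> //; apply: TD.
  by move=> a _ [t [Tt ->]]; exists (a *: t); rewrite linearZ; split=> //; apply: TZ.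
split=> [x rho_x0 [t [Tt x_prt]]|x].
  have ker_t : kernel (rho \o pr) t by rewrite /kernel /= -x_prt.
  by rewrite x_prt (kerT t ker_t Tt) linear0.
have [s [t [kers [Tt decx]]]] := cover (i x).
exists (pr s), (pr t); split=> //; split; first by exists t.
by rewrite -linearD -decx iK.
Qed.

End DirectSummands.

Section Blocks.
Context {R : nzRingType} {M : lmodType R} (m n : nat).

Definition lft (z : dsum M (m + n)) : dsum M m := [ffun i => z (lshift n i)].
Definition rgt (z : dsum M (m + n)) : dsum M n := [ffun i => z (rshift m i)].
Definition inl_block (x : dsum M m) : dsum M (m + n) :=
  [ffun j => if split j is inl i then x i else 0].
Definition inr_block (y : dsum M n) : dsum M (m + n) :=
  [ffun j => if split j is inr i then y i else 0].

Lemma lft_linear : linear lft.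
Proof. by move=> a u v; apply/ffunP=> i; rewrite !ffunE. Qed.
Lemma rgt_linear : linear rgt.
Proof. by move=> a u v; apply/ffunP=> i; rewrite !ffunE. Qed.
Lemma inl_block_linear : linear inl_block.
Proof.
by move=> a u v; apply/ffunP=> j; rewrite !ffunE; case: split => i; rewrite ?ffunE // scaler0 addr0.
Qed.
Lemma inr_block_linear : linear inr_block.
Proof.
by move=> a u v; apply/ffunP=> j; rewrite !ffunE; case: split => i; rewrite ?ffunE // scaler0 addr0.
Qed.

HB.instance Definition _ := GRing.isLinear.Build R _ _ _ lft lft_linear.
HB.instance Definition _ := GRing.isLinear.Build R _ _ _ rgt rgt_linear.
HB.instance Definition _ := GRing.isLinear.Build R _ _ _ inl_block inl_block_linear.
HB.instance Definition _ := GRing.isLinear.Build R _ _ _ inr_block inr_block_linear.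

Lemma split_lshift (i : 'I_m) : split (lshift n i) = inl i.
Proof. exact: (unsplitK (inl i)). Qed.
Lemma split_rshift (i : 'I_n) : split (rshift m i) = inr i.
Proof. exact: (unsplitK (inr i)). Qed.

Lemma lft_inl x : lft (inl_block x) = x.
Proof. by apply/ffunP=> i; rewrite !ffunE split_lshift. Qed.
Lemma rgt_inr y : rgt (inr_block y) = y.
Proof. by apply/ffunP=> i; rewrite !ffunE split_rshift. Qed.
Lemma lft_inr y : lft (inr_block y) = 0.
Proof. by apply/ffunP=> i; rewrite !ffunE split_lshift. Qed.
Lemma rgt_inl x : rgt (inl_block x) = 0.
Proof. by apply/ffunP=> i; rewrite !ffunE split_rshift. Qed.

(* If M^(m+n) is Rickart then M^(m) is M^(n)-Rickart: ker rho is recovered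
   from the endomorphism  inr_block o rho o lft  of M^(m+n). *)
Lemma Rickart_block_rel_Rickart :
  Rickart (dsum M (m + n)) -> rel_Rickart (dsum M m) (dsum M n).
Proof.
move=> rickart rho; apply: (@retract_kernel_summand _ _ _ _ inl_block lft rho lft_inl).
apply: direct_summand_ext (rickart (inr_block \o (rho \o lft))).
exact/kernel_comp_injective/(can_inj rgt_inr).
Qed.

End Blocks.

Arguments lft {R M m} n z.
Arguments rgt {R M} m {n} z.
Arguments inl_block {R M m} n x.
Arguments inr_block {R M} m {n} y.

Lemma finite_Sigma_Rickart_rel {R : nzRingType} {M : lmodType R} :
  finite_Sigma_Rickart M ->
  forall m n : nat, (0 < m)%N -> (0 < n)%N -> rel_Rickart (dsum M m) (dsum M n).
Proof.
move=> sigma m n m_gt0 _.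
exact/Rickart_block_rel_Rickart/sigma/ltn_addr.
Qed.

Section FiniteGeneration.
Context {R : nzRingType} (M : lmodType R).

Lemma fin_gen_image_summand {K : lmodType R} {c} {S : dsum M c -> Prop}
    (g : {linear dsum M c -> K}) :
  (0 < c)%N -> direct_summand S -> fin_gen M (fun y => exists2 z, S z & g z = y).
Proof.
move=> c_gt0 /direct_summand_projection [p [Sp p_id]].
exists c; split=> //; exists (g \o p) => y; split.
  by move=> [z Sz <-]; exists z; rewrite /= p_id.
by move=> [z <-]; exists (p z).
Qed.

(* For g1 : M^(a) -> K, g2 : M^(b) -> K and f : K -> P, the map
   z |-> f (g1 z1) - f (g2 z2) on M^(a+b) = M^(a) (+) M^(b); its kernel
   consists of the pairs with a common image. *)
Definition coincidence_map {K P : lmodType R} (f : {linear K -> P}) {a b}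
    (g1 : {linear dsum M a -> K}) (g2 : {linear dsum M b -> K}) :
    {linear dsum M (a + b) -> P} :=
  (f \o g1 \o lft (m := a) b) \- (f \o g2 \o rgt a (n := b)).

Lemma intersection_as_image (K P : lmodType R) (f : {linear K -> P}) a b
    (g1 : {linear dsum M a -> K}) (g2 : {linear dsum M b -> K}) (N1 N2 : K -> Prop) :
  injective f -> (forall y, N1 y <-> image g1 y) -> (forall y, N2 y <-> image g2 y) ->
  forall y, N1 y /\ N2 y <->
    exists2 z, kernel (coincidence_map f g1 g2) z & g1 (lft b z) = y.
Proof.
move=> f_inj eqN1 eqN2 y; rewrite /kernel /=; split.
  move=> [/eqN1 [x g1x] /eqN2 [x' g2x']].
  exists (inl_block b x + inr_block a x'); last by rewrite linearD /= lft_inl lft_inr addr0.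
  by rewrite !linearD /= lft_inl lft_inr rgt_inl rgt_inr !linear0 addr0 add0r g1x g2x' subrr.
move=> [z /eqP]; rewrite subr_eq0 => /eqP /f_inj g12 <-.
by split; [apply/eqN1; exists (lft b z) | apply/eqN2; exists (rgt a z)].
Qed.

Lemma fin_gen_intersection {K P : lmodType R} {f : {linear K -> P}} :
  injective f -> (forall c, (0 < c)%N -> rel_Rickart (dsum M c) P) ->
  forall N1 N2 : K -> Prop,
    fin_gen M N1 -> fin_gen M N2 -> fin_gen M (fun x => N1 x /\ N2 x).
Proof.
move=> f_inj rickart N1 N2 [a [a_gt0 [g1 eqN1]]] [b [b_gt0 [g2 eqN2]]].
have a_b_gt0 : (0 < a + b)%N by rewrite ltn_addr.
have [c [c_gt0 [g gen_g]]] := fin_gen_image_summand (g1 \o lft b) a_b_gt0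
  (rickart _ a_b_gt0 (coincidence_map f g1 g2)).
exists c; split=> //; exists g => y; apply: iff_trans (gen_g y).
exact: intersection_as_image.
Qed.

Lemma in_add_self : in_add M M.
Proof.
have diag_lin : linear (fun x : M => [ffun _ : 'I_1 => x] : dsum M 1).
  by move=> a u v; apply/ffunP=> i; rewrite !ffunE.
exists 1%N; split=> //; exists (linear_of diag_lin); split.
  by move=> x y /ffunP /(_ ord0); rewrite !ffunE.
apply: direct_summand_ext (direct_summand_total (dsum M 1)) => z; split=> // _.
by exists (z ord0); apply/ffunP=> i; rewrite /= ffunE (ord1 i).
Qed.

End FiniteGeneration.

Lemma add_fin_gen_intersection {R : nzRingType} {M : lmodType R} :
  finite_Sigma_Rickart M -> forall K : lmodType R, in_add M K ->
  forall N1 N2 : K -> Prop,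
    fin_gen M N1 -> fin_gen M N2 -> fin_gen M (fun x => N1 x /\ N2 x).
Proof.
move=> sigma K [n [n_gt0 [f [f_inj _]]]].
apply: (fin_gen_intersection M f_inj) => c c_gt0.
exact: finite_Sigma_Rickart_rel.
Qed.

Theorem mainTheorem2 (R : nzRingType) (M : lmodType R^c) :
  finite_Sigma_Rickart M ->
  (forall m n : nat, (0 < m)%N -> (0 < n)%N -> rel_Rickart (dsum M m) (dsum M n))
  /\
  (forall K : lmodType R^c, in_add M K ->
     forall N1 N2 : K -> Prop, submodule N1 -> submodule N2 ->
       fin_gen M N1 -> fin_gen M N2 -> fin_gen M (fun x => N1 x /\ N2 x))
  /\
  (forall N1 N2 : M -> Prop, submodule N1 -> submodule N2 ->
       fin_gen M N1 -> fin_gen M N2 -> fin_gen M (fun x => N1 x /\ N2 x)).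
Proof.
move=> sigma; split; first exact: finite_Sigma_Rickart_rel.
split; first by move=> K addK N1 N2 _ _; apply: add_fin_gen_intersection.
move=> N1 N2 _ _; exact: (add_fin_gen_intersection sigma M (in_add_self M)).
Qed.
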